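(* Let $(\mathscr C,A,\psi)$ be an entwining structure. Then the category ${_A^{\mathscr C}}Ctr(\psi)$ of entwined contramodules over $(\mathscr C,A,\psi)$ has a set of generators.
   Context: $K$ is a field, $(U',U):=Hom_K(U',U)$. $\mathscr C$ is a coalgebra with several objects (objects $Ob(\mathscr C)$, vector spaces $\mathscr C(X,Y)$, coassociative counital maps $\delta_{XYZ}:\mathscr C(X,Z)\to\mathscr C(Y,Z)\otimes\mathscr C(X,Y)$, $\epsilon_X:\mathscr C(X,X)\to K$). $A$ is a $K$-algebra and $\psi=\{\psi_{XY}:\mathscr C(X,Y)\otimes A\to A\otimes\mathscr C(X,Y)\}$, $\psi(f\otimes a)=a_\psi\otimes f^\psi$, is an entwining: $a_\psi\otimes\delta_{XYZ}(f^\psi)=a_{\psi\psi}\otimes f_{Y1}^\psi\otimes f_{Y2}^\psi$, $(ab)_\psi\otimes f^\psi=a_\psi b_\psi\otimes f^{\psi\psi}$, $\psi(f\otimes1)=1\otimes f$, $a_\psi\epsilon_Z(g^\psi)=\epsilon_Z(g)a$. An entwined contramodule is a family of vector spaces $\mathcal M(X)$ with contramodule maps $\pi_{XY}:(\mathscr C(X,Y),\mathcal M(Y))\to\mathcal M(X)$ (satisfying $\pi_{XZ}\circ(\delta_{XYZ},\mathcal M(Z))=\pi_{XY}\circ(\mathscr C(X,Y),\pi_{YZ})$ and $\pi_{XX}\circ(\epsilon_X,\mathcal M(X))=id$) and left $A$-module structures $\mu_X:\mathcal M(X)\to(A,\mathcal M(X))$ with $\mu_X\circ\pi_{XY}=(A,\pi_{XY})\circ(\psi_{XY},\mathcal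 M(Y))\circ(\mathscr C(X,Y),\mu_Y)$ (via hom-tensor identifications); morphisms are objectwise $A$-linear maps compatible with the $\pi$'s. This category is ${_A^{\mathscr C}}Ctr(\psi)$. *)

From HB Require Import structures.
From mathcomp Require Import all_boot all_algebra.
Set Implicit Arguments. Unset Strict Implicit. Unset Printing Implicit Defensive.
Import GRing.Theory.
Local Open Scope ring_scope.

(* "Small" types: the universe of carriers of MathComp vector spaces
   (Type@{GRing.Lmodule.axioms_.u0}).  Sets (object sets of C, index sets of
   families of generators) are taken in this universe, so that the category of
   entwined contramodules (which lives one universe higher) is not small. *)
Definition SmallType :=
  ltac:(match type of @GRing.Lmodule.sort with forall (R : _), _ -> ?T => exact T end).

Section Defs.
Variable K : fieldType.

Definition bilinear2 (U V W : lmodType K) (b : U -> V -> W) : Prop :=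
  (forall (k : K) u1 u2 v, b (k *: u1 + u2) v = k *: b u1 v + b u2 v) /\
  (forall (k : K) u v1 v2, b u (k *: v1 + v2) = k *: b u v1 + b u v2).

Definition trilinear3 (U V Z W : lmodType K) (t : U -> V -> Z -> W) : Prop :=
  (forall (k : K) u1 u2 v z, t (k *: u1 + u2) v z = k *: t u1 v z + t u2 v z) /\
  (forall (k : K) u v1 v2 z, t u (k *: v1 + v2) z = k *: t u v1 z + t u v2 z) /\
  (forall (k : K) u v z1 z2, t u v (k *: z1 + z2) = k *: t u v z1 + t u v z2).

(* An element of U (x) V is represented by a finite list of simple tensors
   (Sweedler notation); it is tested against all bilinear maps out of U x V
   (universal property of the tensor product). *)
Definition tsum2 (U V W : lmodType K) (b : U -> V -> W) (s : seq (U * V)) : W :=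
  \sum_(p <- s) b p.1 p.2.

Definition tlinear (D U V : lmodType K) (d : D -> seq (U * V)) : Prop :=
  forall (W : lmodType K) (b : U -> V -> W), bilinear2 b ->
  forall (k : K) x1 x2, tsum2 b (d (k *: x1 + x2)) = k *: tsum2 b (d x1) + tsum2 b (d x2).

Definition tbilinear (U V V' U' : lmodType K) (d : U -> V -> seq (V' * U')) : Prop :=
  forall (W : lmodType K) (b : V' -> U' -> W), bilinear2 b ->
  bilinear2 (fun u v => tsum2 b (d u v)).

Record coalgebra := Coalgebra {
  cob : SmallType;
  chom : cob -> cob -> lmodType K;
  cdelta : forall X Y Z : cob, chom X Z -> seq (chom Y Z * chom X Y);
  ceps : forall X : cob, {scalar chom X X};
  cdelta_linear : forall X Y Z, tlinear (@cdelta X Y Z);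
  ccoassoc : forall (X Y Z V : cob) (W : lmodType K)
      (t : chom Z V -> chom Y Z -> chom X Y -> W), trilinear3 t ->
      forall f : chom X V,
      \sum_(p <- cdelta Y f) \sum_(q <- cdelta Z p.1) t q.1 q.2 p.2 =
      \sum_(p <- cdelta Z f) \sum_(q <- cdelta Y p.2) t p.1 q.1 q.2;
  ccounit_l : forall (X Y : cob) (f : chom X Y),
      \sum_(p <- cdelta Y f) ceps Y p.1 *: p.2 = f;
  ccounit_r : forall (X Y : cob) (f : chom X Y),
      \sum_(p <- cdelta X f) ceps X p.2 *: p.1 = f
}.

Arguments chom c X Y : clear implicits.
Arguments ceps c X : clear implicits.
Arguments cdelta {c X} Y {Z}.

Variable C : coalgebra.
Variable A : algType K.

Record entwining := Entwining {
  epsi : forall X Y : cob C, chom C X Y -> A -> seq (A * chom C X Y);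
  epsi_bilinear : forall X Y, tbilinear (@epsi X Y);
  epsi_delta : forall (X Y Z : cob C) (W : lmodType K)
      (t : A -> chom C Y Z -> chom C X Y -> W), trilinear3 t ->
      forall (f : chom C X Z) (a : A),
      \sum_(p <- epsi f a) \sum_(q <- cdelta Y p.2) t p.1 q.1 q.2 =
      \sum_(p <- cdelta Y f) \sum_(q <- epsi p.2 a) \sum_(r <- epsi p.1 q.1)
          t r.1 r.2 q.2;
  epsi_mul : forall (X Y : cob C) (W : lmodType K)
      (b : A -> chom C X Y -> W), bilinear2 b ->
      forall (f : chom C X Y) (a a' : A),
      tsum2 b (epsi f (a * a')) =
      \sum_(p <- epsi f a) \sum_(q <- epsi p.2 a') b (p.1 * q.1) q.2;
  epsi_one : forall (X Y : cob C) (W : lmodType K)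
      (b : A -> chom C X Y -> W), bilinear2 b ->
      forall f : chom C X Y, tsum2 b (epsi f 1) = b 1 f;
  epsi_eps : forall (Z : cob C) (g : chom C Z Z) (a : A),
      \sum_(p <- epsi g a) ceps C Z p.2 *: p.1 = ceps C Z g *: a
}.

Arguments epsi e {X Y} f a.

Variable psi : entwining.

Record ectr := ECtr {
  eM : cob C -> lmodType K;
  epi : forall X Y : cob C, {linear chom C X Y -> eM Y} -> eM X;
  eact : forall X : cob C, A -> eM X -> eM X;
  epi_linear : forall (X Y : cob C) (k : K) (phi1 phi2 phi3 : {linear chom C X Y -> eM Y}),
      (forall f, phi3 f = k *: phi1 f + phi2 f) ->
      epi phi3 = k *: epi phi1 + epi phi2;
  epi_assoc : forall (X Y Z : cob C)
      (sigma : chom C X Y -> {linear chom C Y Z -> eM Z})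
      (phi : {linear chom C X Z -> eM Z}) (rho : {linear chom C X Y -> eM Y}),
      (forall (k : K) h1 h2 g, sigma (k *: h1 + h2) g = k *: sigma h1 g + sigma h2 g) ->
      (forall f, phi f = \sum_(p <- cdelta Y f) sigma p.2 p.1) ->
      (forall h, rho h = epi (sigma h)) ->
      epi phi = epi rho;
  epi_counit : forall (X : cob C) (m : eM X) (phi : {linear chom C X X -> eM X}),
      (forall f, phi f = ceps C X f *: m) -> epi phi = m;
  eact_linl : forall X (k : K) (a1 a2 : A) (m : eM X),
      eact (k *: a1 + a2) m = k *: eact a1 m + eact a2 m;
  eact_linr : forall X (k : K) (a : A) (m1 m2 : eM X),
      eact a (k *: m1 + m2) = k *: eact a m1 + eact a m2;
  eact_one : forall X (m : eM X), eact 1 m = m;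
  eact_mul : forall X (a b : A) (m : eM X), eact (a * b) m = eact a (eact b m);
  epi_act : forall (X Y : cob C) (a : A) (phi phi' : {linear chom C X Y -> eM Y}),
      (forall f, phi' f = \sum_(p <- epsi psi f a) eact p.1 (phi p.2)) ->
      eact a (epi phi) = epi phi'
}.

Arguments eM e X : clear implicits.
Arguments epi {e X Y}.
Arguments eact {e X}.

Record ehom (M N : ectr) := EHom {
  emap : forall X : cob C, {linear eM M X -> eM N X};
  emap_act : forall X (a : A) (m : eM M X), emap X (eact a m) = eact a (emap X m);
  emap_pi : forall (X Y : cob C) (phi : {linear chom C X Y -> eM M Y})
      (phi' : {linear chom C X Y -> eM N Y}),
      (forall f, phi' f = emap Y (phi f)) ->
      emap X (epi phi) = epi phi'
}.

Arguments emap {M N} e X.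

Definition generating (I : Type) (G : I -> ectr) : Prop :=
  forall (M N : ectr) (u v : ehom M N),
    (forall (i : I) (h : ehom (G i) M) (X : cob C) (x : eM (G i) X),
        emap u X (emap h X x) = emap v X (emap h X x)) ->
    forall (X : cob C) (m : eM M X), emap u X m = emap v X m.

Definition has_set_of_generators : Prop :=
  exists (I : SmallType) (G : I -> ectr), generating G.

End Defs.

(* For each object W, the spaces Hom_K(C(Y, W), A) form an entwined
   contramodule, with contraaction pi(Phi)(f) = Phi(f_(2))(f_(1)) along the
   comultiplication and action (a.phi)(f) = a_psi phi(f^psi).  It is free on
   the element eps_W(-)1 in degree W: for every entwined contramodule M and
   m in M(W), the map phi |-> pi(f |-> phi(f).m) is a morphism sending
   eps_W(-)1 to m, by the counit axiom.  Hence these objects, indexed by the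
   set Ob(C), distinguish any two different parallel morphisms. *)

From HB Require Import structures.
From mathcomp Require Import all_boot all_algebra.
From mathcomp Require Import boolp functions.
Set Implicit Arguments. Unset Strict Implicit. Unset Printing Implicit Defensive.
Import GRing.Theory.
Local Open Scope ring_scope.

Section LinearMaps.
Variables (K : fieldType) (U V : lmodType K).

Definition klinear : {pred U -> V} :=
  fun f => `[< forall (k : K) x y, f (k *: x + y) = k *: f x + f y >].

Lemma klinear_submod_closed : submod_closed klinear.
Proof.
split=> [|k f g /asboolP Hf /asboolP Hg]; apply/asboolP => c x y /=.
  by rewrite scaler0 addr0.
by rewrite !fctE /= Hf Hg !scalerDr !scalerA mulrC addrACA.
Qed.

HB.instance Definition _ :=
  GRing.isSubmodClosed.Build K (U -> V) klinear klinear_submod_closed.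

Record lfun := LFun { lfun_val :> U -> V; lfun_valP : lfun_val \in klinear }.

HB.instance Definition _ := [isSub for lfun_val].
HB.instance Definition _ := [Choice of lfun by <:].
HB.instance Definition _ := [SubChoice_isSubLmodule of lfun by <:].

HB.instance Definition _ (f : lfun) :=
  GRing.isLinear.Build K U V *:%R f (fun k x y => asboolW (lfun_valP f) k x y).

Lemma lfunP (f g : lfun) : f =1 g -> f = g.
Proof. by move=> /funext fg; apply: val_inj. Qed.

Lemma lfunD (f g : lfun) x : (f + g) x = f x + g x. Proof. by []. Qed.
Lemma lfunZ c (f : lfun) x : (c *: f) x = c *: f x. Proof. by []. Qed.
Lemma lfun_sum (I : Type) (r : seq I) (F : I -> lfun) x :
  (\sum_(i <- r) F i) x = \sum_(i <- r) F i x.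
Proof. by rewrite -[LHS]/((val (\sum_(i <- r) F i)) x) raddf_sum fct_sumE. Qed.
End LinearMaps.

Definition linear_of (K : fieldType) (U V : lmodType K) (f : U -> V)
    (fL : forall (k : K) x y, f (k *: x + y) = k *: f x + f y) : {linear U -> V} :=
  HB.pack f (GRing.isLinear.Build K U V *:%R f fL).

Section ContramoduleFacts.
Variables (K : fieldType) (C : coalgebra K) (A : algType K) (psi : entwining C A).
Variables (M : ectr psi) (X : cob C).

Definition eactl (m : eM M X) : {linear A -> eM M X} :=
  linear_of (fun k a b => eact_linl k a b m).

Lemma eactZl (k : K) (a : A) (m : eM M X) : eact (k *: a) m = k *: eact a m.
Proof. exact: (linearZZ (eactl m)). Qed.

Lemma eact_suml (m : eM M X) (I : Type) (r : seq I) (F : I -> A) :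
  eact (\sum_(i <- r) F i) m = \sum_(i <- r) eact (F i) m.
Proof. exact: (linear_sum (eactl m)). Qed.

End ContramoduleFacts.

Section FreeContramodule.
Variables (K : fieldType) (C : coalgebra K) (A : algType K) (psi : entwining C A).
Variable W : cob C.

Definition free_space (Y : cob C) : lmodType K := lfun (chom Y W) A.

Lemma mulr_eval_bilinear (U : lmodType K) (phi : lfun U A) :
  bilinear2 (fun (a : A) (g : U) => a * phi g).
Proof.
split=> k u1 u2 v; first by rewrite mulrDl scalerAl.
by rewrite linearP mulrDr scalerAr.
Qed.

Lemma eval_bilinear (U : lmodType K) Y (Phi : {linear U -> free_space Y}) :
  bilinear2 (fun (g : chom Y W) (h : U) => Phi h g).
Proof. by split=> k u1 u2 v; rewrite linearP. Qed.

Lemma eval2_trilinear (U V : lmodType K) Z (sigma : U -> {linear V -> free_space Z}) :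
  (forall (k : K) h1 h2 g, sigma (k *: h1 + h2) g = k *: sigma h1 g + sigma h2 g) ->
  trilinear3 (fun (g1 : chom Z W) (g2 : V) (g3 : U) => sigma g3 g2 g1).
Proof. by move=> sigmaL; split; [|split] => k u1 u2 v z; rewrite ?sigmaL ?linearP. Qed.

Lemma mulr_eval_trilinear (U : lmodType K) Y (Phi : {linear U -> free_space Y}) :
  trilinear3 (fun (a : A) (g : chom Y W) (h : U) => a * Phi h g).
Proof.
split; [|split] => k u1 u2 v z; first by rewrite mulrDl scalerAl.
  by rewrite linearP mulrDr scalerAr.
by rewrite linearP lfunD lfunZ mulrDr scalerAr.
Qed.

Definition free_act Y (a : A) (phi : free_space Y) : free_space Y :=
  @LFun K _ _ (fun f => \sum_(p <- epsi psi f a) p.1 * phi p.2)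
    (asboolT (fun k f g => (epsi_bilinear psi (mulr_eval_bilinear phi)).1 k f g a)).

Definition free_pi X Y (Phi : {linear chom X Y -> free_space Y}) : free_space X :=
  @LFun K _ _ (fun f => \sum_(p <- cdelta Y f) Phi p.2 p.1)
    (asboolT (cdelta_linear (eval_bilinear Phi))).

Lemma free_pi_linear X Y (k : K) (Phi1 Phi2 Phi3 : {linear chom X Y -> free_space Y}) :
  (forall f, Phi3 f = k *: Phi1 f + Phi2 f) ->
  free_pi Phi3 = k *: free_pi Phi1 + free_pi Phi2.
Proof.
move=> Phi3E; apply: lfunP => f; rewrite lfunD lfunZ /=.
by under eq_bigr do rewrite Phi3E; rewrite big_split scaler_sumr.
Qed.

Lemma free_pi_assoc X Y Z (sigma : chom X Y -> {linear chom Y Z -> free_space Z})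
    (Phi : {linear chom X Z -> free_space Z}) (Rho : {linear chom X Y -> free_space Y}) :
  (forall (k : K) h1 h2 g, sigma (k *: h1 + h2) g = k *: sigma h1 g + sigma h2 g) ->
  (forall f, Phi f = \sum_(p <- cdelta Y f) sigma p.2 p.1) ->
  (forall h, Rho h = free_pi (sigma h)) ->
  free_pi Phi = free_pi Rho.
Proof.
move=> sigmaL PhiE RhoE; apply: lfunP => f /=.
under eq_bigr do rewrite PhiE lfun_sum.
under [RHS]eq_bigr do rewrite RhoE /=.
exact/esym/(ccoassoc (eval2_trilinear sigmaL)).
Qed.

Lemma free_pi_counit X (phi : free_space X) (Phi : {linear chom X X -> free_space X}) :
  (forall f, Phi f = ceps X f *: phi) -> free_pi Phi = phi.
Proof.
move=> PhiE; apply: lfunP => f /=.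
by under eq_bigr do rewrite PhiE lfunZ -linearZ; rewrite -linear_sum ccounit_r.
Qed.

Lemma free_act_linl X (k : K) (a1 a2 : A) (phi : free_space X) :
  free_act (k *: a1 + a2) phi = k *: free_act a1 phi + free_act a2 phi.
Proof. by apply: lfunP => f; exact: (epsi_bilinear psi (mulr_eval_bilinear phi)).2. Qed.

Lemma free_act_linr X (k : K) (a : A) (phi1 phi2 : free_space X) :
  free_act a (k *: phi1 + phi2) = k *: free_act a phi1 + free_act a phi2.
Proof.
apply: lfunP => f; rewrite lfunD lfunZ /=.
by under eq_bigr do rewrite mulrDr -scalerAr; rewrite big_split scaler_sumr.
Qed.

Lemma free_act1 X (phi : free_space X) : free_act 1 phi = phi.
Proof.
apply: lfunP => f /=; rewrite -[RHS]mul1r.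
exact: epsi_one (mulr_eval_bilinear phi) f.
Qed.

Lemma free_actM X (a b : A) (phi : free_space X) :
  free_act (a * b) phi = free_act a (free_act b phi).
Proof.
apply: lfunP => f /=; rewrite [LHS](epsi_mul psi (mulr_eval_bilinear phi)).
by apply: eq_bigr => p _; rewrite mulr_sumr; apply: eq_bigr => q _; rewrite mulrA.
Qed.

Lemma free_act_pi X Y (a : A) (Phi Phi' : {linear chom X Y -> free_space Y}) :
  (forall f, Phi' f = \sum_(p <- epsi psi f a) free_act p.1 (Phi p.2)) ->
  free_act a (free_pi Phi) = free_pi Phi'.
Proof.
move=> Phi'E; apply: lfunP => f /=.
under eq_bigr do rewrite mulr_sumr.
under [RHS]eq_bigr do rewrite Phi'E lfun_sum.
exact: epsi_delta (mulr_eval_trilinear Phi) f a.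
Qed.

Definition free_ctr : ectr psi :=
  ECtr free_pi_linear free_pi_assoc free_pi_counit
    free_act_linl free_act_linr free_act1 free_actM free_act_pi.

Fact free_unit_linear (k : K) (f g : chom W W) :
  ceps W (k *: f + g) *: (1 : A) = k *: (ceps W f *: 1) + ceps W g *: 1.
Proof. by rewrite linearP scalerDl scalerA. Qed.

Definition free_unit : eM free_ctr W :=
  @LFun K _ _ (fun f => ceps W f *: (1 : A)) (asboolT free_unit_linear).

End FreeContramodule.

Section FreeLift.
Variables (K : fieldType) (C : coalgebra K) (A : algType K) (psi : entwining C A).
Variables (W : cob C) (M : ectr psi) (m : eM M W).
Local Notation F := (free_ctr psi W).

Definition free_lift_fun Y (phi : eM F Y) : eM M Y := epi (eactl m \o phi).

Lemma free_lift_fun_linear Y (k : K) (phi1 phi2 : eM F Y) :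
  free_lift_fun (k *: phi1 + phi2) = k *: free_lift_fun phi1 + free_lift_fun phi2.
Proof. by apply: epi_linear => f /=; rewrite eact_linl. Qed.

Definition free_lift_map Y : {linear eM F Y -> eM M Y} :=
  linear_of (@free_lift_fun_linear Y).

Lemma free_lift_act Y (a : A) (phi : eM F Y) :
  free_lift_map Y (eact a phi) = eact a (free_lift_map Y phi).
Proof.
symmetry; apply: epi_act => f /=.
by rewrite eact_suml; apply: eq_bigr => p _; rewrite eact_mul.
Qed.

Lemma free_lift_pi X Y (Phi : {linear chom X Y -> eM F Y})
    (Phi' : {linear chom X Y -> eM M Y}) :
  (forall f, Phi' f = free_lift_map Y (Phi f)) ->
  free_lift_map X (epi Phi) = epi Phi'.
Proof.
move=> Phi'E; apply: (epi_assoc (sigma := fun h => eactl m \o Phi h)) => [k h1 h2 g|f|h] /=.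
- by rewrite linearP eact_linl.
- by rewrite eact_suml.
- by rewrite Phi'E.
Qed.

Definition free_lift : ehom F M := EHom free_lift_act free_lift_pi.

Lemma free_lift_unit : emap free_lift W (free_unit psi W) = m.
Proof. by apply: epi_counit => f /=; rewrite eactZl eact_one. Qed.
End FreeLift.

Theorem theorem3p10 (K : fieldType) (C : coalgebra K) (A : algType K)
  (psi : entwining C A) : has_set_of_generators psi.
Proof.
exists (cob C), (free_ctr psi) => M N u v uv_eq X m.
by rewrite -(free_lift_unit m); apply: uv_eq.
Qed.
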